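(* Let $m\ge2$ and $f_1,\dots,f_m:X\to\mathbb R_{+\infty}$ with $\bigcap_{i=1}^m\operatorname{dom} f_i\ne\emptyset$. Assume $$\operatorname{cl}\Big(\sum_{i=1}^m\operatorname{epi} f_i^*\Big)=\operatorname{epi}\Big(\sum_{i=1}^mf_i\Big)^*,$$ where the closure is taken in $\mathcal L\times\mathbb R$. Then for all $x\in\bigcap_{i=1}^m\operatorname{dom} f_i$ and all $\varepsilon\ge0$, $$\partial_\varepsilon\Big(\sum_{i=1}^m f_i\Big)(x)=\bigcap_{\eta>0}\operatorname{cl}\Big(\bigcup_{\substack{\varepsilon_i\ge0,\ \sum_{i=1}^m\varepsilon_i=\varepsilon+\eta}}\ \sum_{i=1}^m\partial_{\varepsilon_i}f_i(x)\Big).$$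
   Context: $X$ is a nonempty set; $\mathbb R_{+\infty}=\mathbb R\cup\{+\infty\}$. $\mathcal L$ is a family of functions $X\to\mathbb R$ closed under pointwise addition and real scalar multiplication, equipped with the pointwise convergence topology (weakest topology making all evaluations $l\mapsto l(x)$ continuous); $\mathcal L\times\mathbb R$ carries the product topology; $\operatorname{cl}$ denotes closure. For $f:X\to\mathbb R_{+\infty}$: $\operatorname{dom} f=\{x:f(x)<+\infty\}$; $f^*(l)=\sup_{x\in X}(l(x)-f(x))$; $\operatorname{epi} f^*=\{(l,r)\in\mathcal L\times\mathbb R:f^*(l)\le r\}$; for $\varepsilon\ge0$, $x\in\operatorname{dom} f$, $\partial_\varepsilon f(x)=\{l\in\mathcal L: f(y)-f(x)-(l(y)-l(x))+\varepsilon\ge0\ \forall y\in X\}$. Sums of subsets (of $\mathcal L$ or of $\mathcal L\times\mathbb R$) are Minkowski sums. *)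

From Stdlib Require Import Reals List.
Open Scope R_scope.

Inductive ERp : Type := Fin (r : R) | PInf.

Definition eadd (a b : ERp) : ERp :=
  match a, b with Fin x, Fin y => Fin (x + y) | _, _ => PInf end.

Fixpoint rsum (n : nat) (g : nat -> R) : R :=
  match n with O => 0 | S k => rsum k g + g k end.
Fixpoint esum (n : nat) (g : nat -> ERp) : ERp :=
  match n with O => Fin 0 | S k => eadd (esum k g) (g k) end.

Definition fsum {X : Type} (m : nat) (f : nat -> X -> ERp) : X -> ERp :=
  fun x => esum m (fun i => f i x).

Definition indom {X : Type} (f : X -> ERp) (x : X) : Prop := exists r, f x = Fin r.

Definition is_linear_family {X : Type} (L : (X -> R) -> Prop) : Prop :=
  (forall l1 l2, L l1 -> L l2 -> L (fun x => l1 x + l2 x)) /\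
  (forall (a : R) l, L l -> L (fun x => a * l x)).

(* epi f^* = {(l,r) in L x R : f^*(l) <= r}, with f^*(l) = sup_x (l x - f x);
   sup <= r unfolds to: l x - f x <= r for all x (trivial where f x = +oo). *)
Definition epi_conj {X : Type} (L : (X -> R) -> Prop) (f : X -> ERp)
  (p : (X -> R) * R) : Prop :=
  L (fst p) /\
  forall x, match f x with Fin fx => fst p x - fx <= snd p | PInf => True end.

Definition esubdiff {X : Type} (L : (X -> R) -> Prop) (f : X -> ERp) (eps : R)
  (x : X) (l : X -> R) : Prop :=
  L l /\ exists fx, f x = Fin fx /\
  forall y, match f y with
            | Fin fy => fy - fx - (l y - l x) + eps >= 0
            | PInf => True end.

Definition msum_pair {X : Type} (m : nat) (A : nat -> (X -> R) * R -> Prop)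
  (p : (X -> R) * R) : Prop :=
  exists g : nat -> (X -> R) * R,
    (forall i, (i < m)%nat -> A i (g i)) /\
    (forall x, fst p x = rsum m (fun i => fst (g i) x)) /\
    snd p = rsum m (fun i => snd (g i)).

Definition msum {X : Type} (m : nat) (A : nat -> (X -> R) -> Prop)
  (l : X -> R) : Prop :=
  exists g : nat -> X -> R,
    (forall i, (i < m)%nat -> A i (g i)) /\
    (forall x, l x = rsum m (fun i => g i x)).

(* Closure in L (pointwise convergence topology): basic neighbourhoods of l
   are {l' in L : |l' x - l x| < d for x in a finite list xs}. *)
Definition clL {X : Type} (L : (X -> R) -> Prop) (S : (X -> R) -> Prop)
  (l : X -> R) : Prop :=
  L l /\ forall (xs : list X) (d : R), d > 0 ->
    exists l', S l' /\ Forall (fun x => Rabs (l' x - l x) < d) xs.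

(* Closure in L x R (product topology) *)
Definition clLR {X : Type} (L : (X -> R) -> Prop) (S : (X -> R) * R -> Prop)
  (p : (X -> R) * R) : Prop :=
  L (fst p) /\ forall (xs : list X) (d : R), d > 0 ->
    exists q, S q /\ Forall (fun x => Rabs (fst q x - fst p x) < d) xs
              /\ Rabs (snd q - snd p) < d.

(* An ε-subgradient l of F = Σ f_i at x gives the point (l, l x - F x + ε) of epi F^*, which by
   hypothesis is a limit of sums Σ (g_i, r_i) with (g_i, r_i) ∈ epi f_i^*.  Each such pair makes
   g_i an e_i-subgradient of f_i at x with e_i = r_i - g_i x + f_i x ≥ 0, and Σ e_i tends to ε,
   so after padding one e_i, l is a limit of elements of Σ ∂_{e_i} f_i(x) with Σ e_i = ε + η.
   Conversely Σ ∂_{e_i} f_i(x) ⊆ ∂_{Σ e_i} F(x), and the subgradient inequality at a point y only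
   involves the values at x and y, so it passes to pointwise limits and to η → 0. *)

From Stdlib Require Import Reals List Lra Lia.
Open Scope R_scope.

Lemma rsum_ext n g h : (forall i, (i < n)%nat -> g i = h i) -> rsum n g = rsum n h.
Proof.
  induction n as [|n IH]; intros Hgh; simpl; [reflexivity|].
  rewrite IH by (intros; apply Hgh; lia); rewrite Hgh by lia; reflexivity.
Qed.

Lemma rsum_plus n g h : rsum n (fun i => g i + h i) = rsum n g + rsum n h.
Proof. induction n as [|n IH]; simpl; [lra|]. rewrite IH; lra. Qed.

Lemma rsum_minus n g h : rsum n (fun i => g i - h i) = rsum n g - rsum n h.
Proof. induction n as [|n IH]; simpl; [lra|]. rewrite IH; lra. Qed.

Lemma rsum_nonneg n g : (forall i, (i < n)%nat -> 0 <= g i) -> 0 <= rsum n g.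
Proof.
  induction n as [|n IH]; intros Hg; simpl; [lra|].
  pose proof (IH (fun i Hi => Hg i ltac:(lia))); pose proof (Hg n ltac:(lia)); lra.
Qed.

Lemma rsum_pad n e s : (1 <= n)%nat -> rsum n e <= s ->
  exists e', (forall i, e i <= e' i) /\ rsum n e' = s.
Proof.
  intros Hn Hs; destruct n as [|k]; [lia|].
  exists (fun i => if Nat.eqb i k then e i + (s - rsum (S k) e) else e i); split.
  - intros i; destruct (Nat.eqb i k); lra.
  - simpl; rewrite Nat.eqb_refl.
    rewrite (rsum_ext k _ e) by (intros i Hi; rewrite (proj2 (Nat.eqb_neq i k)) by lia; reflexivity).
    simpl in Hs |- *; lra.
Qed.

(* The value of a finite extended real; the junk value on [PInf] is never used. *)
Definition val (a : ERp) : R := match a with Fin r => r | PInf => 0 end.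

Lemma indom_val {X : Type} (g : X -> ERp) x : indom g x -> g x = Fin (val (g x)).
Proof. intros [r Hr]; rewrite Hr; reflexivity. Qed.

Lemma esum_Fin n h : (forall i, (i < n)%nat -> exists r, h i = Fin r) ->
  esum n h = Fin (rsum n (fun i => val (h i))).
Proof.
  induction n as [|n IH]; intros Hh; simpl; [reflexivity|].
  rewrite IH by (intros; apply Hh; lia).
  destruct (Hh n ltac:(lia)) as [r Hr]; rewrite Hr; reflexivity.
Qed.

Lemma esum_Fin_inv n h s : esum n h = Fin s ->
  (forall i, (i < n)%nat -> h i = Fin (val (h i))) /\ s = rsum n (fun i => val (h i)).
Proof.
  revert s; induction n as [|n IH]; intros s Hs; simpl in Hs |- *.
  - injection Hs as <-; split; [lia|reflexivity].
  - destruct (esum n h) as [a|] eqn:Ha, (h n) as [b|] eqn:Hb; try discriminate.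
    injection Hs as <-; destruct (IH a eq_refl) as [Hfin ->]; split; [|reflexivity].
    intros i Hi; destruct (Nat.eq_dec i n) as [->|Hne]; [rewrite Hb; reflexivity|].
    apply Hfin; lia.
Qed.

Lemma fsum_dom {X : Type} m (f : nat -> X -> ERp) x :
  (forall i, (i < m)%nat -> indom (f i) x) ->
  fsum m f x = Fin (rsum m (fun i => val (f i x))).
Proof. intros Hx; apply esum_Fin; exact Hx. Qed.

Section Subdifferentials.

Variables (X : Type) (L : (X -> R) -> Prop).

Lemma esubdiff_mono f eps eps' x l :
  eps <= eps' -> esubdiff L f eps x l -> esubdiff L f eps' x l.
Proof.
  intros Hle [HLl [fx [Hfx Hineq]]]; split; [exact HLl|].
  exists fx; split; [exact Hfx|]; intros y; specialize (Hineq y).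
  destruct (f y); [lra|exact I].
Qed.

Lemma esubdiff_epi_conj f eps x l fx : f x = Fin fx ->
  esubdiff L f eps x l -> epi_conj L f (l, l x - fx + eps).
Proof.
  intros Hfx [HLl [fx' [Hfx' Hineq]]]; rewrite Hfx in Hfx'; injection Hfx' as <-.
  split; [exact HLl|]; intros y; specialize (Hineq y); simpl.
  destruct (f y); [lra|exact I].
Qed.

Lemma epi_conj_esubdiff f x g r fx : f x = Fin fx -> epi_conj L f (g, r) ->
  0 <= r - g x + fx /\ esubdiff L f (r - g x + fx) x g.
Proof.
  intros Hfx [HLg Hepi]; simpl in Hepi; split.
  - specialize (Hepi x); rewrite Hfx in Hepi; lra.
  - split; [exact HLg|]; exists fx; split; [exact Hfx|].
    intros y; specialize (Hepi y); destruct (f y); [lra|exact I].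
Qed.

Definition esubdiff_sum_union m (f : nat -> X -> ERp) (eps : R) (x : X) (l : X -> R) :=
  exists e : nat -> R,
    (forall i, (i < m)%nat -> 0 <= e i) /\
    rsum m e = eps /\
    msum m (fun i => esubdiff L (f i) (e i) x) l.

Variables (m : nat) (f : nat -> X -> ERp) (x : X).
Hypothesis (Hx : forall i, (i < m)%nat -> indom (f i) x).

Lemma msum_pair_epi_conj_sub q s : (1 <= m)%nat ->
  msum_pair m (fun i => epi_conj L (f i)) q ->
  snd q - fst q x + rsum m (fun i => val (f i x)) <= s ->
  esubdiff_sum_union m f s x (fst q).
Proof.
  intros Hm [g [Hg [Hq1 Hq2]]] Hs.
  set (gap := fun i => snd (g i) - fst (g i) x + val (f i x)).
  assert (Hgap : forall i, (i < m)%nat -> 0 <= gap i /\ esubdiff L (f i) (gap i) x (fst (g i))).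
  { intros i Hi; apply epi_conj_esubdiff; [exact (indom_val _ _ (Hx i Hi))|].
    rewrite <- surjective_pairing; exact (Hg i Hi). }
  assert (Hsum : rsum m gap = snd q - fst q x + rsum m (fun i => val (f i x))).
  { unfold gap; rewrite rsum_plus, rsum_minus, Hq1, Hq2; reflexivity. }
  destruct (rsum_pad m gap s Hm ltac:(lra)) as [e [Hge He]].
  exists e; split; [|split; [exact He|]].
  - intros i Hi; pose proof (proj1 (Hgap i Hi)); pose proof (Hge i); lra.
  - exists (fun i => fst (g i)); split; [|exact Hq1].
    intros i Hi; exact (esubdiff_mono _ _ _ _ _ (Hge i) (proj2 (Hgap i Hi))).
Qed.

Lemma msum_esubdiff_ineq e l y r :
  msum m (fun i => esubdiff L (f i) (e i) x) l -> fsum m f y = Fin r ->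
  0 <= r - rsum m (fun i => val (f i x)) - (l y - l x) + rsum m e.
Proof.
  intros [g [Hg Hl]] Hy; destruct (esum_Fin_inv _ _ _ Hy) as [Hfy ->].
  rewrite Hl, Hl, <- !rsum_minus, <- rsum_plus.
  apply rsum_nonneg; intros i Hi.
  destruct (Hg i Hi) as [_ [fx [Hfx Hineq]]]; specialize (Hineq y).
  rewrite (indom_val _ _ (Hx i Hi)) in Hfx; injection Hfx as <-.
  rewrite (Hfy i Hi) in Hineq; lra.
Qed.

Lemma esubdiff_fsum_sub_cl eps l eta : (1 <= m)%nat ->
  (forall p, epi_conj L (fsum m f) p ->
             clLR L (msum_pair m (fun i => epi_conj L (f i))) p) ->
  esubdiff L (fsum m f) eps x l -> eta > 0 ->
  clL L (esubdiff_sum_union m f (eps + eta) x) l.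
Proof.
  intros Hm Hcl Hl Heta.
  set (Fx := rsum m (fun i => val (f i x))).
  destruct (Hcl _ (esubdiff_epi_conj _ _ _ _ Fx (fsum_dom m f x Hx) Hl)) as [HLl Happrox].
  split; [exact HLl|]; intros xs d Hd.
  pose proof (Rmin_l d (eta / 2)); pose proof (Rmin_r d (eta / 2)).
  destruct (Happrox (x :: xs) (Rmin d (eta / 2)) ltac:(apply Rmin_pos; lra))
    as [q [Hq [Hclose Hsnd]]].
  inversion Hclose as [|? ? Hqx Hxs]; subst; simpl in Hqx, Hsnd.
  apply Rabs_def2 in Hqx; apply Rabs_def2 in Hsnd.
  exists (fst q); split.
  - apply msum_pair_epi_conj_sub; [exact Hm|exact Hq|]; fold Fx; lra.
  - eapply Forall_impl; [|exact Hxs]; simpl; intros z Hz; lra.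
Qed.

(* For a fixed y the subgradient inequality involves l only at x and y, so a violation by
   K < 0 survives approximation within -K/8 at x, y and the slack η = -K/2. *)
Lemma cl_sub_esubdiff_fsum eps l :
  (forall eta, eta > 0 -> clL L (esubdiff_sum_union m f (eps + eta) x) l) ->
  esubdiff L (fsum m f) eps x l.
Proof.
  intros Hcl; split; [exact (proj1 (Hcl 1 ltac:(lra)))|].
  set (Fx := rsum m (fun i => val (f i x))).
  exists Fx; split; [exact (fsum_dom m f x Hx)|]; intros y.
  destruct (fsum m f y) as [r|] eqn:Hy; [|exact I].
  destruct (Rlt_or_le (r - Fx - (l y - l x) + eps) 0) as [Hneg|]; [exfalso|lra].
  remember (r - Fx - (l y - l x) + eps) as K eqn:HK.
  destruct (proj2 (Hcl (- K / 2) ltac:(lra)) (x :: y :: nil) (- K / 8) ltac:(lra))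
    as [l' [[e [_ [He Hl']]] Hclose]].
  inversion Hclose as [|? ? Hlx Hclose']; subst; inversion Hclose' as [|? ? Hly _]; subst.
  apply Rabs_def2 in Hlx; apply Rabs_def2 in Hly.
  pose proof (msum_esubdiff_ineq e l' y r Hl' Hy) as Hineq; fold Fx in Hineq.
  lra.
Qed.

End Subdifferentials.

Theorem mainTheorem10 (X : Type) (x0 : X) (L : (X -> R) -> Prop)
  (HL : is_linear_family L) (m : nat) (Hm : (2 <= m)%nat)
  (f : nat -> X -> ERp)
  (Hdom : exists x, forall i, (i < m)%nat -> indom (f i) x)
  (Hcl : forall p, clLR L (msum_pair m (fun i => epi_conj L (f i))) p
                   <-> epi_conj L (fsum m f) p) :
  forall (x : X) (eps : R),
    (forall i, (i < m)%nat -> indom (f i) x) -> 0 <= eps ->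
    forall l : X -> R,
      esubdiff L (fsum m f) eps x l <->
      (forall eta : R, eta > 0 ->
         clL L (fun l' => exists e : nat -> R,
                   (forall i, (i < m)%nat -> 0 <= e i) /\
                   rsum m e = eps + eta /\
                   msum m (fun i => esubdiff L (f i) (e i) x) l') l).
Proof.
  intros x eps Hx _ l; split.
  - intros Hl eta Heta.
    apply (esubdiff_fsum_sub_cl X L m f x Hx); [lia| |exact Hl|exact Heta].
    intros p Hp; apply Hcl; exact Hp.
  - apply (cl_sub_esubdiff_fsum X L m f x Hx).
Qed.
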